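(* Let $G$ be a finite nonabelian group having a self-normalising subgroup $S$ (i.e. $N_G(S)=S$) of index $[G:S]=4$. Then $\beta(G)\ge \frac{3}{2}|G|$.
   Context: For a nonempty subset $X$ of a group $G$, $Q(X):=\{xy^{-1}: x,y\in X\}$. Nonempty subsets $S_1,S_2,S_3$ of $G$ satisfy the Triple Product Property (TPP) if for all $s_i\in Q(S_i)$: $s_1s_2s_3=1$ iff $s_1=s_2=s_3=1$. A group $G$ realizes $\langle n,p,m\rangle$ if there are subsets $S_1,S_2,S_3\subseteq G$ with $|S_1|=n$, $|S_2|=p$, $|S_3|=m$ satisfying the TPP. For a nontrivial finite group $G$, the TPP capacity is $\beta(G):=\max\{npm : G \text{ realizes } \langle n,p,m\rangle\}$. *)

From mathcomp Require Import all_boot all_fingroup.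
Set Implicit Arguments. Unset Strict Implicit. Unset Printing Implicit Defensive.
Local Open Scope group_scope.

Definition Qset (gT : finGroupType) (X : {set gT}) : {set gT} :=
  [set x * y^-1 | x in X, y in X].

Definition TPP (gT : finGroupType) (S1 S2 S3 : {set gT}) : bool :=
  [&& S1 != set0, S2 != set0, S3 != set0 &
   [forall s1 in Qset S1, forall s2 in Qset S2, forall s3 in Qset S3,
      (s1 * s2 * s3 == 1) == [&& s1 == 1, s2 == 1 & s3 == 1]]].

Definition realizes (gT : finGroupType) (G : {group gT}) (n p m : nat) : bool :=
  [exists S1 : {set gT}, exists S2 : {set gT}, exists S3 : {set gT},
    [&& S1 \subset G, S2 \subset G, S3 \subset G,
        #|S1| == n, #|S2| == p, #|S3| == m & TPP S1 S2 S3]].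

(* TPP capacity: max of n p m over realized triples (sizes are at most |G|). *)
Definition beta (gT : finGroupType) (G : {group gT}) : nat :=
  \max_(n < #|G|.+1) \max_(p < #|G|.+1) \max_(m < #|G|.+1)
     (if realizes G n p m then n * p * m else 0).

From mathcomp Require Import all_boot all_fingroup.
From mathcomp Require Import zify.
Set Implicit Arguments. Unset Strict Implicit. Unset Printing Implicit Defensive.
Local Open Scope group_scope.

(* For g outside the self-normalising subgroup S, the double coset S g S has
   |S| * |S : S^g^-1| >= 2|S| elements. Since G \ S has only 3|S| elements, it
   is a single double coset; hence |S^x : S| = 3 for every x in G \ S, and
   g^-1 \in S g S yields some x in G \ S with x^2 in S. Then S, {1, x} and a
   right transversal T of S cap S^x in S^x satisfy the triple product property:
   s1 s2 s3 = 1 with s2 in {1, x, x^-1} and s3 in Q(T) <= S^x forces either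
   x in S or s3 in Q(T) cap S = {1}. So G realizes <|S|, 2, 3>, and
   beta(G) >= 6|S| = 3|G|/2. *)

Section DoubleCosets.
Variables (gT : finGroupType) (S : {group gT}).

Definition dcoset (g : gT) : {set gT} := S :* g * S.

Lemma mem_dcoset g u :
  reflect (exists s1 s2, [/\ s1 \in S, s2 \in S & u = s1 * g * s2]) (u \in dcoset g).
Proof.
apply: (iffP mulsgP) => [[v s2 /rcosetP[s1 s1S ->] s2S ->]|[s1 [s2 [s1S s2S ->]]]].
  by exists s1, s2.
by exists (s1 * g) s2; rewrite // mem_rcoset mulgK.
Qed.

Lemma dcoset1 : dcoset 1 = S.
Proof. by rewrite /dcoset rcoset1 mulGid. Qed.

Lemma dcoset_disjoint g h : h \notin dcoset g -> [disjoint dcoset g & dcoset h].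
Proof.
move=> hNg; apply/pred0P => u /=; apply/andP=> [[/mem_dcoset[s1 [s2 [s1S s2S ->]]]]].
case/mem_dcoset=> s3 [s4 [s3S s4S Eu]]; case/mem_dcoset: hNg.
exists (s3^-1 * s1), (s2 * s4^-1); split; rewrite ?groupM ?groupV //.
have -> : h = s3^-1 * (s1 * g * s2) * s4^-1 by rewrite Eu !mulgA mulVg mul1g mulgK.
by rewrite !mulgA.
Qed.

Lemma dcoset_sub (G : {group gT}) g : S \subset G -> g \in G -> dcoset g \subset G.
Proof.
move=> sSG gG; apply/subsetP=> _ /mem_dcoset[s1 [s2 [s1S s2S ->]]].
by rewrite !groupM // (subsetP sSG).
Qed.

Lemma card_dcoset g : #|dcoset g| = (#|S : S :^ g^-1| * #|S|)%N.
Proof.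
rewrite -(card_rcoset _ g^-1) -(cardJg S g^-1) LagrangeMr.
by rewrite /dcoset /= conjsgE invgK !mulgA.
Qed.

Lemma card_dcoset_ge g : g \notin 'N(S) -> (2 * #|S| <= #|dcoset g|)%N.
Proof.
rewrite inE => gNS.
by rewrite card_dcoset leq_mul2r indexg_gt1 -sub_conjg gNS orbT.
Qed.

End DoubleCosets.

Section SelfNormalisingIndexFour.
Variables (gT : finGroupType) (G S : {group gT}).
Hypotheses (sSG : S \subset G) (nSG : 'N_G(S) = S) (iSG : #|G : S| = 4).

Lemma card_index_four : #|G| = (4 * #|S|)%N.
Proof. by rewrite -(Lagrange sSG) iSG mulnC. Qed.

Lemma card_complement : #|G :\: S| = (3 * #|S|)%N.
Proof. by rewrite cardsD (setIidPr sSG) card_index_four -{2}[#|S|]mul1n -mulnBl. Qed.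

Lemma complement_notin_norm g : g \in G :\: S -> g \notin 'N(S).
Proof.
by case/setDP=> gG; apply: contra => gN; rewrite -nSG inE gG.
Qed.

Lemma dcoset_sub_complement g : g \in G :\: S -> dcoset S g \subset G :\: S.
Proof.
case/setDP=> gG gNS; rewrite subsetD dcoset_sub //= disjoint_sym -{1}dcoset1.
by rewrite dcoset_disjoint ?dcoset1.
Qed.

Lemma dcoset_complement g : g \in G :\: S -> dcoset S g = G :\: S.
Proof.
move=> gGS; apply/eqP; rewrite eqEsubset dcoset_sub_complement //=.
apply/subsetP=> h hGS; apply: contraT => hNg.
have /subset_leq_card : dcoset S g :|: dcoset S h \subset G :\: S.
  by rewrite subUset !dcoset_sub_complement.
have := (leq_card_setU (dcoset S g) (dcoset S h)).2; rewrite dcoset_disjoint // => /eqP ->.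
have := card_dcoset_ge (complement_notin_norm gGS).
have := card_dcoset_ge (complement_notin_norm hGS).
have := cardG_gt0 S; rewrite card_complement; lia.
Qed.

Lemma indexJ_complement x : x \in G :\: S -> #|S :^ x : S| = 3.
Proof.
move=> xGS; apply/eqP; rewrite -(indexJg _ _ x^-1) /= conjsgK.
by rewrite -(eqn_pmul2r (cardG_gt0 S)) -card_dcoset dcoset_complement ?card_complement.
Qed.

Lemma exists_sqr_in_complement : exists2 x, x \in G :\: S & x * x \in S.
Proof.
have [g gGS] : exists g, g \in G :\: S.
  by apply/set0Pn; rewrite -card_gt0 card_complement muln_gt0 cardG_gt0.
have [gG gNS] := setDP gGS.
have : g^-1 \in dcoset S g by rewrite dcoset_complement // !inE !groupV gG gNS.
case/mem_dcoset=> s1 [s2 [s1S s2S Eg]].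
exists (s1 * g); first by rewrite !inE groupMl // gNS groupM // (subsetP sSG).
have E : s1 * g * (s1 * g) * s2 = s1.
  by rewrite -!mulgA (mulgA s1 g s2) -Eg mulgV mulg1.
by rewrite -(mulgK s2 (s1 * g * (s1 * g))) E groupM ?groupV.
Qed.

End SelfNormalisingIndexFour.

Section TripleProduct.
Variable gT : finGroupType.
Implicit Types (H K S : {group gT}) (T : {set gT}) (x : gT).

Lemma Qset_subG H T : T \subset H -> Qset T \subset H.
Proof.
move/subsetP=> sTH; apply/subsetP=> _ /imset2P[a b aT bT ->].
by rewrite groupM ?groupV ?sTH.
Qed.

Lemma Qset_group H : Qset H = H.
Proof.
apply/eqP; rewrite eqEsubset Qset_subG //=; apply/subsetP=> a aH.
by apply/imset2P; exists a 1; rewrite ?invg1 ?mulg1.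
Qed.

Lemma Qset_pair1 x : Qset [set 1; x] \subset [set 1; x; x^-1].
Proof.
apply/subsetP=> _ /imset2P[a b /set2P[]-> /set2P[]-> ->];
  by rewrite ?invg1 ?mulg1 ?mul1g ?mulgV !inE eqxx ?orbT.
Qed.

Lemma exists_transversal_Qset H K :
  exists T, [/\ T \subset H, #|T| = #|H : K| & Qset T :&: K \subset [1]].
Proof.
set P := rcosets (H :&: K) H.
have partP : partition P H by apply: rcosets_partition; apply: subsetIl.
have trT := transversalP partP; set T := transversal P H in trT.
have [_ tiP _] := and3P partP.
have sTH : T \subset H := transversal_sub trT.
have pblockE a : a \in H -> pblock P a = (H :&: K) :* a.
  move=> aH; have Pa : (H :&: K) :* a \in P by apply/rcosetsP; exists a.
  by rewrite (def_pblock tiP Pa) ?rcoset_refl.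
exists T; split => //; first by rewrite (card_transversal trT) -indexgI.
apply/subsetP=> _ /setIP[/imset2P[a b aT bT ->] abK]; rewrite inE.
have [aH bH] := (subsetP sTH a aT, subsetP sTH b bT).
suff -> : a = b by rewrite mulgV.
apply: (pblock_inj trT) => //; rewrite !pblockE //; apply/rcoset_eqP.
by rewrite mem_rcoset inE abK groupM ?groupV.
Qed.

Lemma TPP_pair_conj S x T :
    x \notin S -> x * x \in S -> T != set0 -> T \subset S :^ x ->
  Qset T :&: S \subset [1] -> TPP S [set 1; x] T.
Proof.
move=> xNS xxS T0 sTSx QTS; apply/and4P; split=> //.
- by apply/set0Pn; exists 1.
- by apply/set0Pn; exists 1; rewrite !inE eqxx.
rewrite Qset_group; apply/forall_inP=> s1 s1S; apply/forall_inP=> s2 s2Q.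
apply/forall_inP=> s3 s3Q; apply/eqP; apply/idP/idP=> [/eqP E|]; last first.
  by case/and3P=> /eqP-> /eqP-> /eqP->; rewrite !mulg1.
have s3Sx : s3 ^ x^-1 \in S by rewrite -mem_conjg (subsetP (Qset_subG sTSx)).
have [s2_1 | s2xS] : s2 = 1 \/ s2 * x^-1 \in S.
  case/(subsetP (Qset_pair1 x))/setUP: s2Q => [/set2P[]|/set1P] ->; first by left.
    by right; rewrite mulgV.
  by right; rewrite -invMg groupV.
- have s3S : s3 \in S.
    by move: E; rewrite s2_1 mulg1 => /(canRL (mulKg s1)) ->; rewrite mulg1 groupV.
  have /set1P s3_1 : s3 \in [1] by rewrite (subsetP QTS) // inE s3Q.
  by move: E; rewrite s2_1 s3_1 !mulg1 => ->; rewrite !eqxx.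
- have Ex : x^-1 = s1 * (s2 * x^-1) * s3 ^ x^-1.
    by rewrite conjgE invgK !mulgA mulgKV E mul1g.
  by case/negP: xNS; rewrite -groupV Ex (groupM (groupM s1S s2xS) s3Sx).
Qed.

End TripleProduct.

Local Open Scope nat_scope.

Lemma leq_beta (gT : finGroupType) (G : {group gT}) n p m :
  realizes G n p m -> n * p * m <= beta G.
Proof.
move=> rG; case/existsP: (rG) => S1 /existsP[S2 /existsP[S3]].
case/and5P=> sS1G sS2G sS3G /eqP n1 /and3P[/eqP p2 /eqP m3 _].
have bound (A : {set gT}) : A \subset G -> #|A| < #|G|.+1.
  by move=> sAG; rewrite ltnS subset_leq_card.
rewrite /beta; apply: leq_trans (leq_bigmax (Ordinal (bound _ sS1G))) => /=.
apply: leq_trans (leq_bigmax (Ordinal (bound _ sS2G))) => /=.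
apply: leq_trans (leq_bigmax (Ordinal (bound _ sS3G))) => /=.
by rewrite n1 p2 m3 rG.
Qed.

Theorem mainTheorem5 (gT : finGroupType) (G S : {group gT}) :
  ~~ abelian G -> S \subset G -> ('N_G(S))%g = S -> #|G : S|%g = 4 ->
  3 * #|G| <= 2 * beta G.
Proof.
(* Nonabelianity is implied: a proper subgroup of an abelian group is normal. *)
move=> _ sSG nSG iSG.
have [x /setDP[xG xNS] xxS] := exists_sqr_in_complement sSG nSG iSG.
have [T [sTSx cardT QTS]] := exists_transversal_Qset (S :^ x)%G S.
have {}cardT : #|T| = 3 by rewrite cardT (indexJ_complement sSG nSG iSG) // inE xNS.
have x_neq1 : x != 1%g by apply: contraNneq xNS => ->.
have sSxG : S :^ x \subset G by rewrite -(conjGid xG) conjSg.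
have rG : realizes G #|S| 2 3.
  apply/existsP; exists (S : {set gT}).
  apply/existsP; exists [set 1%g; x]; apply/existsP; exists T.
  rewrite sSG (subset_trans sTSx sSxG) subUset !sub1set group1 xG cards2 cardT.
  by rewrite (eq_sym 1%g) x_neq1 TPP_pair_conj ?eqxx // -card_gt0 cardT.
have := leq_beta rG; rewrite (card_index_four sSG iSG); lia.
Qed.
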